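(* Let $A\in\mathbb{R}^{n\times n}$ be Metzler and $J\in\mathbb{R}^{n\times n}$ be nonnegative. The following statements are equivalent: (a) There exists $\lambda\in\mathbb{R}^n_{>0}$ such that $\lambda^\top A<0$ and $\lambda^\top (J-I_n)<0$. (b) $\ker\begin{bmatrix} I_n & -A & -(J-I_n)\end{bmatrix}\cap\mathbb{R}^{3n}_{\ge0}=\{0\}$. Moreover, if one of these statements holds, then the impulsive system is asymptotically stable under arbitrary dwell-time, i.e. for every impulse sequence with $T_k\in(0,\infty)$ for all $k$.
   Context: Consider the linear impulsive system $\dot x(t)=Ax(t)$ for $t\neq t_k$, $x(t_k^+)=Jx(t_k)$, $x(t_0)=x_0$, where $x(t)\in\mathbb{R}^n$, $x(t^+):=\lim_{s\downarrow t}x(s)$ (trajectories are left-continuous), and the impulse times $\{t_k\}_{k\in\mathbb{N}}$ form a strictly increasing sequence with $t_k\to\infty$. The dwell-times are $T_k:=t_{k+1}-t_k$. A square matrix is Metzler if all its off-diagonal entries are nonnegative, and nonnegative if all its entries are nonnegative. Vector inequalities are componentwise; $\mathbb{R}^n_{>0}$ ($\mathbb{R}^n_{\ge0}$) denotes vectors with positive (nonnegative) entries. The system is asymptotically stable under a given dwell-time constraint if its zero solution is globally asymptotically stable for every impulse sequence whose dwell-times satisfy the constraint. *)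

(* real analysis (derivatives, limits) is needed for the
   impulsive system, so vectors/matrices are represented as functions
   on indices, with only indices < n meaningful. *)
From Stdlib Require Import Reals Lra Lia.
Open Scope R_scope.

Fixpoint vsum (n : nat) (f : nat -> R) : R :=
  match n with
  | O => 0
  | S m => vsum m f + f m
  end.

Definition vec := nat -> R.
Definition mat := nat -> nat -> R.

Definition idm : mat := fun i j => if Nat.eqb i j then 1 else 0.

Definition mulmv (n : nat) (M : mat) (v : vec) : vec :=
  fun i => vsum n (fun j => M i j * v j).

Definition mulvm (n : nat) (l : vec) (M : mat) : vec :=
  fun j => vsum n (fun i => l i * M i j).

Definition metzler (n : nat) (A : mat) : Prop :=
  forall i j, (i < n)%nat -> (j < n)%nat -> i <> j -> 0 <= A i j.

Definition nonneg_mat (n : nat) (J : mat) : Prop :=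
  forall i j, (i < n)%nat -> (j < n)%nat -> 0 <= J i j.

Definition JmI (J : mat) : mat := fun i j => J i j - idm i j.

Definition cond_a (n : nat) (A J : mat) : Prop :=
  exists l : vec,
    (forall i, (i < n)%nat -> 0 < l i) /\
    (forall j, (j < n)%nat -> mulvm n l A j < 0) /\
    (forall j, (j < n)%nat -> mulvm n l (JmI J) j < 0).

(* (b) ker [I, -A, -(J-I)] /\ R^{3n}_{>=0} = {0}:
   a vector (x;y;z) in R^{3n} is in the kernel iff x - A y - (J-I) z = 0 *)
Definition cond_b (n : nat) (A J : mat) : Prop :=
  forall x y z : vec,
    (forall i, (i < n)%nat -> 0 <= x i /\ 0 <= y i /\ 0 <= z i) ->
    (forall i, (i < n)%nat ->
        x i - mulmv n A y i - mulmv n (JmI J) z i = 0) ->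
    forall i, (i < n)%nat -> x i = 0 /\ y i = 0 /\ z i = 0.

(* admissible impulse sequence (arbitrary dwell-time): strictly increasing,
   diverging to +infinity; t 0 is the initial time t_0 *)
Definition impulse_seq (t : nat -> R) : Prop :=
  (forall k, t k < t (S k)) /\
  (forall M : R, exists k, M < t k).

(* x : R -> vec is a solution on [t 0, oo) of
     xdot = A x  (t <> t_k),   x(t_k^+) = J x(t_k),   x(t_0) = x0,
   with left-continuous trajectories. *)
Definition is_solution (n : nat) (A J : mat) (t : nat -> R) (x0 : vec)
    (x : R -> vec) : Prop :=
  (forall i, (i < n)%nat -> x (t 0%nat) i = x0 i) /\
  (forall k s i, (i < n)%nat -> t k < s < t (S k) ->
     derivable_pt_lim (fun r => x r i) s (mulmv n A (x s) i)) /\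
  (forall k i, (i < n)%nat -> forall eps, 0 < eps -> exists d, 0 < d /\
     forall s, t (S k) - d < s < t (S k) ->
       Rabs (x s i - x (t (S k)) i) < eps) /\
  (forall k i, (i < n)%nat -> forall eps, 0 < eps -> exists d, 0 < d /\
     forall s, t k < s < t k + d ->
       Rabs (x s i - mulmv n J (x (t k)) i) < eps).

(* global asymptotic stability of the zero solution for the impulse
   sequence t (infinity-norm on R^n) *)
Definition GAS (n : nat) (A J : mat) (t : nat -> R) : Prop :=
  (forall eps, 0 < eps -> exists delta, 0 < delta /\
     forall (x0 : vec) (x : R -> vec),
       (forall i, (i < n)%nat -> Rabs (x0 i) < delta) ->
       is_solution n A J t x0 x ->
       forall s, t 0%nat <= s -> forall i, (i < n)%nat -> Rabs (x s i) < eps) /\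
  (forall (x0 : vec) (x : R -> vec), is_solution n A J t x0 x ->
     forall i, (i < n)%nat -> forall eps, 0 < eps -> exists T,
       forall s, T <= s -> Rabs (x s i) < eps).

Definition AS_arbitrary_dwell (n : nat) (A J : mat) : Prop :=
  forall t : nat -> R, impulse_seq t -> GAS n A J t.

(* (a) => (b): pairing a nonnegative kernel vector (x, y, z) with lambda gives
   lambda^T x - (lambda^T A) y - (lambda^T (J - I)) z = 0, a sum of nonnegative
   terms, each of which must vanish.  (b) => (a) is Gordan's alternative for the
   columns of [I, -A, -(J - I)], proved by Fourier-Motzkin elimination.

   For stability, V(x) = sum_i lambda_i |x_i| is a common Lyapunov function.
   Since A is Metzler and lambda^T A <= -c lambda^T, the quantity
   e^{ct} V(x(t)) is nonincreasing between impulses; this is shown for the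
   smooth approximations sum_i lambda_i sqrt(x_i^2 + d^2) and then d -> 0.
   Since J >= 0 and lambda^T J <= lambda^T, V(J x) <= V(x) at the jumps.  Hence
   lambda_i |x_i(t)| <= e^{-c (t - t_0)} V(x_0) whatever the dwell times. *)

From Stdlib Require Import Reals Lra Lia List.
Open Scope R_scope.

Lemma vsum_ext m f g : (forall i, (i < m)%nat -> f i = g i) -> vsum m f = vsum m g.
Proof.
  induction m as [|m IH]; intros Hfg; simpl; [reflexivity|].
  rewrite IH by (intros; apply Hfg; lia).
  now rewrite (Hfg m) by lia.
Qed.

Lemma vsum_plus m f g : vsum m (fun i => f i + g i) = vsum m f + vsum m g.
Proof. induction m as [|m IH]; simpl; [ring|]. rewrite IH. ring. Qed.

Lemma vsum_scal m a f : vsum m (fun i => a * f i) = a * vsum m f.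
Proof. induction m as [|m IH]; simpl; [ring|]. rewrite IH. ring. Qed.

Lemma vsum_zero m : vsum m (fun _ => 0) = 0.
Proof. induction m as [|m IH]; simpl; [ring|]. rewrite IH. ring. Qed.

Lemma vsum_le m f g : (forall i, (i < m)%nat -> f i <= g i) -> vsum m f <= vsum m g.
Proof.
  induction m as [|m IH]; intros Hfg; simpl; [lra|].
  assert (f m <= g m) by (apply Hfg; lia).
  assert (vsum m f <= vsum m g) by (apply IH; intros; apply Hfg; lia).
  lra.
Qed.

Lemma vsum_nonneg m f : (forall i, (i < m)%nat -> 0 <= f i) -> 0 <= vsum m f.
Proof. intros Hf. rewrite <- (vsum_zero m). now apply vsum_le. Qed.

Lemma vsum_term_le m f k :
  (k < m)%nat -> (forall i, (i < m)%nat -> 0 <= f i) -> f k <= vsum m f.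
Proof.
  induction m as [|m IH]; intros Hk Hf; simpl; [lia|].
  destruct (Nat.eq_dec k m) as [->|Hkm].
  - assert (0 <= vsum m f) by (apply vsum_nonneg; intros; apply Hf; lia). lra.
  - assert (f k <= vsum m f) by (apply IH; [lia | intros; apply Hf; lia]).
    assert (0 <= f m) by (apply Hf; lia). lra.
Qed.

Lemma vsum_nonneg_eq0 m f :
  (forall i, (i < m)%nat -> 0 <= f i) -> vsum m f = 0 -> forall i, (i < m)%nat -> f i = 0.
Proof.
  intros Hf Hsum i Hi. pose proof (vsum_term_le m f i Hi Hf). pose proof (Hf i Hi). lra.
Qed.

Lemma Rabs_vsum_le m f : Rabs (vsum m f) <= vsum m (fun i => Rabs (f i)).
Proof.
  induction m as [|m IH]; simpl; [rewrite Rabs_R0; lra|].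
  eapply Rle_trans; [apply Rabs_triang|]. lra.
Qed.

Lemma vsum_swap m p (F : nat -> nat -> R) :
  vsum m (fun i => vsum p (fun j => F i j)) = vsum p (fun j => vsum m (fun i => F i j)).
Proof.
  induction m as [|m IH]; simpl; [now rewrite vsum_zero|].
  now rewrite IH, <- vsum_plus.
Qed.

Lemma vsum_kronecker m k f : (k < m)%nat -> vsum m (fun i => f i * idm i k) = f k.
Proof.
  induction m as [|m IH]; intros Hk; simpl; [lia|].
  unfold idm at 2. destruct (Nat.eqb_spec m k) as [->|Hmk].
  - rewrite (vsum_ext _ _ (fun _ => 0)), vsum_zero; [ring|].
    intros i Hi. unfold idm. destruct (Nat.eqb_spec i k); [lia|ring].
  - rewrite IH by lia. ring.
Qed.

Lemma vsum_mulmv m l M v :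
  vsum m (fun i => l i * mulmv m M v i) = vsum m (fun j => mulvm m l M j * v j).
Proof.
  unfold mulmv, mulvm.
  rewrite (vsum_ext m _ (fun i => vsum m (fun j => l i * M i j * v j))).
  - rewrite vsum_swap. apply vsum_ext. intros j _.
    rewrite Rmult_comm, <- vsum_scal. apply vsum_ext. intros; ring.
  - intros i _. rewrite <- vsum_scal. apply vsum_ext. intros; ring.
Qed.

(** * Gordan's alternative *)

Definition dot (m : nat) (u v : vec) : R := vsum m (fun i => u i * v i).

(* A finite nonnegative combination is a list of (weight, vector) pairs. *)
Definition lcomb (c : list (R * vec)) : vec :=
  fun i => fold_right (fun e acc => fst e * snd e i + acc) 0 c.

Definition weights_in (L : list vec) (c : list (R * vec)) : Prop :=
  forall e, In e c -> 0 <= fst e /\ In (snd e) L.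

Definition positive_dependence (m : nat) (L : list vec) (c : list (R * vec)) : Prop :=
  weights_in L c /\ (exists e, In e c /\ 0 < fst e) /\
  (forall i, (i < m)%nat -> lcomb c i = 0).

Lemma lcomb_coord_zero c k : (forall e, In e c -> snd e k = 0) -> lcomb c k = 0.
Proof.
  induction c as [|e c IH]; intros Hc; simpl; [reflexivity|].
  rewrite IH by (intros; apply Hc; simpl; auto).
  rewrite (Hc e) by (simpl; auto). ring.
Qed.

Lemma strict_separation (la lb : list R) :
  (forall a b, In a la -> In b lb -> a < b) ->
  exists t, (forall a, In a la -> a < t) /\ (forall b, In b lb -> t < b).
Proof.
  assert (Hbelow : forall a, (forall b, In b lb -> a < b) ->
            exists t, a < t /\ forall b, In b lb -> t < b).
  { induction lb as [|b lb IH]; intros a Ha.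
    - exists (a + 1). simpl. split; [lra | tauto].
    - destruct (IH a) as [t [Hat Ht]]; [intros; apply Ha; simpl; auto|].
      assert (a < b) by (apply Ha; simpl; auto).
      exists (Rmin t ((a + b) / 2)). split; [apply Rmin_case; lra|].
      intros b' [<-|Hb']; [pose proof (Rmin_r t ((a + b) / 2)); lra|].
      pose proof (Rmin_l t ((a + b) / 2)). specialize (Ht b' Hb'). lra. }
  induction la as [|a la IH]; intros Hab.
  - destruct (Hbelow (fold_right Rmin 0 lb - 1)) as [t [_ Ht]].
    + intros b Hb. enough (fold_right Rmin 0 lb <= b) by lra.
      clear -Hb. induction lb as [|b' lb IH]; [destruct Hb|].
      destruct Hb as [<-|Hb]; simpl; [apply Rmin_l|].
      eapply Rle_trans; [apply Rmin_r | auto].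
    + exists t. simpl. tauto.
  - destruct IH as [t [Hla Hlb]]; [intros; apply Hab; simpl; auto|].
    destruct (Rlt_dec a t) as [Hat|Hat].
    + exists t. split; [intros a' [<-|Ha']|]; auto.
    + destruct (Hbelow a) as [t' [Hat' Ht']]; [intros; apply Hab; simpl; auto|].
      exists t'. split; [|exact Ht'].
      intros a' [<-|Ha']; [exact Hat'|]. specialize (Hla a' Ha'). lra.
Qed.

Section FourierMotzkin.

Variables (m : nat) (L : list vec).

Definition filter_by (P : vec -> Prop) (Pdec : forall a, {P a} + {~ P a}) : list vec :=
  filter (fun a => if Pdec a then true else false) L.

Lemma In_filter_by P Pdec a : In a (filter_by P Pdec) <-> In a L /\ P a.
Proof.
  unfold filter_by. rewrite filter_In.
  destruct (Pdec a); split; intros [? ?]; try discriminate; tauto.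
Qed.

Definition pos_part := filter_by (fun a => 0 < a m) (fun a => Rlt_dec 0 (a m)).
Definition zero_part := filter_by (fun a => a m = 0) (fun a => Req_EM_T (a m) 0).
Definition neg_part := filter_by (fun a => a m < 0) (fun a => Rlt_dec (a m) 0).

(* The positive combination of [p] and [q] that cancels coordinate [m]. *)
Definition eliminate (p q : vec) : vec := fun i => - q m * p i + p m * q i.

Definition eliminated : list vec :=
  zero_part ++ flat_map (fun p => map (eliminate p) neg_part) pos_part.

Lemma In_eliminated b :
  In b eliminated <->
  In b zero_part \/ exists p q, In p pos_part /\ In q neg_part /\ b = eliminate p q.
Proof.
  unfold eliminated. rewrite in_app_iff, in_flat_map. split.
  - intros [Hb|[p [Hp Hb]]]; [now left|].
    apply in_map_iff in Hb as [q [<- Hq]]. right. eauto.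
  - intros [Hb|[p [q [Hp [Hq ->]]]]]; [now left|].
    right. exists p. split; [exact Hp|]. apply in_map_iff. eauto.
Qed.

Lemma eliminated_coord b : In b eliminated -> b m = 0.
Proof.
  rewrite In_eliminated. intros [Hb|[p [q [_ [_ ->]]]]].
  - now apply In_filter_by in Hb.
  - unfold eliminate. ring.
Qed.

Lemma lift_eliminated_combination c' :
  weights_in eliminated c' ->
  exists c, weights_in L c /\
    ((exists e, In e c' /\ 0 < fst e) -> exists e, In e c /\ 0 < fst e) /\
    (forall i, lcomb c i = lcomb c' i).
Proof.
  induction c' as [|[w b] c' IH]; intros Hc'.
  - exists nil. split; [intros _ []|]. split; [intros [e [[] _]] | reflexivity].
  - destruct IH as [c [Hc [Hpos Hsum]]]; [intros e He; apply Hc'; simpl; auto|].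
    destruct (Hc' (w, b)) as [Hw Hb]; [simpl; auto|]. simpl in Hw, Hb.
    assert (Hpos' : (exists e, In e ((w, b) :: c') /\ 0 < fst e) ->
                    0 < w \/ exists e, In e c /\ 0 < fst e).
    { intros [e [[<-|He] He']]; [now left | right; eauto]. }
    apply In_eliminated in Hb as [Hb|[p [q [Hp [Hq ->]]]]].
    + exists ((w, b) :: c). split; [|split].
      * intros e [<-|He]; [|auto]. split; [exact Hw|]. now apply In_filter_by in Hb.
      * intros Hne. destruct (Hpos' Hne) as [Hw'|[e [He He']]].
        -- exists (w, b). simpl. auto.
        -- exists e. simpl. auto.
      * intros i. simpl. now rewrite Hsum.
    + apply In_filter_by in Hp as [HpL Hpm]. apply In_filter_by in Hq as [HqL Hqm].
      exists ((w * - q m, p) :: (w * p m, q) :: c). split; [|split].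
      * intros e [<-|[<-|He]]; simpl; auto; split; auto; apply Rmult_le_pos; lra.
      * intros Hne. destruct (Hpos' Hne) as [Hw'|[e [He He']]].
        -- exists (w * - q m, p). simpl. split; [auto|]. apply Rmult_lt_0_compat; lra.
        -- exists e. simpl. auto.
      * intros i. simpl. rewrite Hsum. unfold eliminate. ring.
Qed.

Definition extend (mu : vec) (t : R) : vec := fun i => if Nat.eqb i m then t else mu i.

Lemma dot_extend mu t a : dot (S m) (extend mu t) a = dot m mu a + t * a m.
Proof.
  unfold dot, extend. simpl. rewrite Nat.eqb_refl. f_equal.
  apply vsum_ext. intros i Hi. destruct (Nat.eqb_spec i m); [lia | reflexivity].
Qed.

Lemma extend_positive mu :
  (forall b, In b eliminated -> 0 < dot m mu b) ->
  exists t, forall a, In a L -> 0 < dot (S m) (extend mu t) a.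
Proof.
  intros Hmu.
  set (lower := fun p : vec => - dot m mu p / p m).
  set (upper := fun q : vec => dot m mu q / - q m).
  destruct (strict_separation (map lower pos_part) (map upper neg_part)) as [t [Hlow Hup]].
  { intros a b Ha Hb.
    apply in_map_iff in Ha as [p [<- Hp]]. apply in_map_iff in Hb as [q [<- Hq]].
    assert (Hpq : 0 < dot m mu (eliminate p q))
      by (apply Hmu, In_eliminated; right; eauto).
    replace (dot m mu (eliminate p q)) with (- q m * dot m mu p + p m * dot m mu q) in Hpq
      by (unfold dot, eliminate; rewrite <- !vsum_scal, <- vsum_plus;
          apply vsum_ext; intros; ring).
    apply In_filter_by in Hp as [_ Hpm]. apply In_filter_by in Hq as [_ Hqm].
    unfold lower, upper. apply (Rmult_lt_reg_r (p m * - q m)); [nra|].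
    replace (- dot m mu p / p m * (p m * - q m)) with (dot m mu p * q m) by (field; lra).
    replace (dot m mu q / - q m * (p m * - q m)) with (dot m mu q * p m) by (field; lra).
    lra. }
  exists t. intros a Ha. rewrite dot_extend.
  destruct (Rtotal_order 0 (a m)) as [Hm|[Hm|Hm]].
  - assert (Hl : lower a < t) by (apply Hlow, in_map, In_filter_by; auto).
    unfold lower in Hl. apply (Rmult_lt_compat_r (a m)) in Hl; [|exact Hm].
    replace (- dot m mu a / a m * a m) with (- dot m mu a) in Hl by (field; lra). lra.
  - rewrite <- Hm, Rmult_0_r, Rplus_0_r.
    apply Hmu, In_eliminated. left. apply In_filter_by. auto.
  - assert (Hu : t < upper a) by (apply Hup, in_map, In_filter_by; auto).
    unfold upper in Hu. apply (Rmult_lt_compat_r (- a m)) in Hu; [|lra].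
    replace (dot m mu a / - a m * - a m) with (dot m mu a) in Hu by (field; lra). lra.
Qed.

End FourierMotzkin.

Theorem gordan m L :
  (forall c, ~ positive_dependence m L c) -> exists l, forall a, In a L -> 0 < dot m l a.
Proof.
  revert L. induction m as [|m IH]; intros L Hnodep.
  - destruct L as [|a L]; [exists (fun _ => 0); intros _ []|].
    exfalso. apply (Hnodep ((1, a) :: nil)). split; [|split].
    + intros e [<-|[]]. simpl. split; [lra | now left].
    + exists (1, a). simpl. split; [now left | lra].
    + intros i Hi. lia.
  - destruct (IH (eliminated m L)) as [mu Hmu].
    { intros c' [Hc' [Hpos Hsum]].
      destruct (lift_eliminated_combination m L c' Hc') as [c [Hc [Hpos' Hsum']]].
      apply (Hnodep c). split; [exact Hc|]. split; [now apply Hpos'|].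
      intros i Hi. rewrite Hsum'. destruct (Nat.eq_dec i m) as [->|Him].
      - apply lcomb_coord_zero. intros e He. apply (eliminated_coord m L), Hc', He.
      - apply Hsum. lia. }
    destruct (extend_positive m L mu Hmu) as [t Ht]. eauto.
Qed.

(** * Equivalence of (a) and (b) *)

Lemma vsum_kernel_pairing n l A M x y z :
  vsum n (fun i => l i * (x i - mulmv n A y i - mulmv n M z i)) =
  vsum n (fun i => l i * x i + - mulvm n l A i * y i + - mulvm n l M i * z i).
Proof.
  transitivity (vsum n (fun i => l i * x i) + -1 * vsum n (fun i => l i * mulmv n A y i)
                + -1 * vsum n (fun i => l i * mulmv n M z i)).
  - rewrite <- !vsum_scal, <- !vsum_plus. apply vsum_ext. intros; ring.
  - rewrite !vsum_mulmv, <- !vsum_scal, <- !vsum_plus. apply vsum_ext. intros; ring.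
Qed.

Lemma cond_a_cond_b n A J : cond_a n A J -> cond_b n A J.
Proof.
  intros [l [Hl [HlA HlJ]]] x y z Hxyz Hker.
  assert (Hterms : forall i, (i < n)%nat ->
            0 <= l i * x i /\ 0 <= - mulvm n l A i * y i /\ 0 <= - mulvm n l (JmI J) i * z i).
  { intros i Hi. specialize (Hxyz i Hi). specialize (Hl i Hi).
    specialize (HlA i Hi). specialize (HlJ i Hi). repeat split; apply Rmult_le_pos; lra. }
  assert (Hsum0 : forall i, (i < n)%nat ->
            l i * x i + - mulvm n l A i * y i + - mulvm n l (JmI J) i * z i = 0).
  { apply vsum_nonneg_eq0; [intros i Hi; specialize (Hterms i Hi); lra|].
    rewrite <- vsum_kernel_pairing, (vsum_ext _ _ (fun _ => 0)); [apply vsum_zero|].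
    intros i Hi. rewrite Hker by exact Hi. ring. }
  intros i Hi. specialize (Hterms i Hi). specialize (Hsum0 i Hi).
  specialize (Hl i Hi). specialize (HlA i Hi). specialize (HlJ i Hi).
  assert (Hx : l i * x i = 0) by lra.
  assert (Hy : - mulvm n l A i * y i = 0) by lra.
  assert (Hz : - mulvm n l (JmI J) i * z i = 0) by lra.
  apply Rmult_integral in Hx, Hy, Hz. repeat split; lra.
Qed.

Definition total_weight (c : list (R * vec)) : R := fold_right (fun e acc => fst e + acc) 0 c.

Lemma total_weight_nonneg L c : weights_in L c -> 0 <= total_weight c.
Proof.
  induction c as [|e c IH]; intros Hc; simpl; [lra|].
  destruct (Hc e) as [He _]; [now left|].
  assert (0 <= total_weight c) by (apply IH; intros e' He'; apply Hc; simpl; auto). lra.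
Qed.

Lemma total_weight_pos L c :
  weights_in L c -> (exists e, In e c /\ 0 < fst e) -> 0 < total_weight c.
Proof.
  intros Hc [e [He He']]. induction c as [|e' c IH]; [destruct He|]. simpl.
  assert (Hc' : weights_in L c) by (intros e'' He''; apply Hc; simpl; auto).
  destruct (Hc e') as [He'' _]; [now left|].
  destruct He as [<-|He].
  - pose proof (total_weight_nonneg L c Hc'). lra.
  - pose proof (IH Hc' He). lra.
Qed.

Lemma mulmv_lin n M w u v i :
  mulmv n M (fun j => w * u j + v j) i = w * mulmv n M u i + mulmv n M v i.
Proof. unfold mulmv. rewrite <- vsum_scal, <- vsum_plus. apply vsum_ext. intros; ring. Qed.

Lemma mulmv_zero n M i : mulmv n M (fun _ => 0) i = 0.
Proof. unfold mulmv. rewrite (vsum_ext _ _ (fun _ => 0)) by (intros; ring). apply vsum_zero. Qed.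

Lemma mulmv_unit n M k i : (k < n)%nat -> mulmv n M (fun j => idm j k) i = M i k.
Proof. apply vsum_kronecker. Qed.

Section KernelCone.

Variables (n : nat) (A J : mat).

Definition cone_repr (v : vec) (s : R) : Prop :=
  exists x y z : vec,
    (forall i, (i < n)%nat -> 0 <= x i /\ 0 <= y i /\ 0 <= z i) /\
    (forall i, (i < n)%nat -> v i = x i - mulmv n A y i - mulmv n (JmI J) z i) /\
    vsum n (fun i => x i + y i + z i) = s.

Lemma cone_repr_lcomb L c :
  (forall a, In a L -> cone_repr a 1) -> weights_in L c -> cone_repr (lcomb c) (total_weight c).
Proof.
  intros HL. induction c as [|[w a] c IH]; intros Hc.
  - exists (fun _ => 0), (fun _ => 0), (fun _ => 0). split; [intros; lra|]. split.
    + intros i _. rewrite !mulmv_zero. unfold lcomb. simpl. ring.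
    + rewrite (vsum_ext _ _ (fun _ => 0)) by (intros; ring). apply vsum_zero.
  - destruct (Hc (w, a)) as [Hw Ha]; [now left|]. simpl in Hw, Ha.
    destruct (HL a Ha) as [x1 [y1 [z1 [H1 [E1 S1]]]]].
    destruct IH as [x2 [y2 [z2 [H2 [E2 S2]]]]]; [intros e He; apply Hc; simpl; auto|].
    exists (fun i => w * x1 i + x2 i), (fun i => w * y1 i + y2 i), (fun i => w * z1 i + z2 i).
    split; [|split].
    + intros i Hi. destruct (H1 i Hi) as [? [? ?]]. destruct (H2 i Hi) as [? [? ?]].
      repeat split; apply Rplus_le_le_0_compat; auto; apply Rmult_le_pos; auto.
    + intros i Hi. rewrite !mulmv_lin. unfold lcomb at 1. simpl. fold (lcomb c i).
      rewrite E1, E2 by exact Hi. ring.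
    + simpl. rewrite <- S2, <- (Rmult_1_r w) at 1. rewrite <- S1, <- vsum_scal, <- vsum_plus.
      apply vsum_ext. intros; ring.
Qed.

Definition unit_col (k : nat) : vec := fun i => idm i k.
Definition neg_col (M : mat) (k : nat) : vec := fun i => - M i k.

Definition kernel_columns : list vec :=
  map unit_col (seq 0 n) ++ map (neg_col A) (seq 0 n) ++ map (neg_col (JmI J)) (seq 0 n).

Lemma vsum_unit k : (k < n)%nat -> vsum n (fun i => idm i k) = 1.
Proof.
  intros Hk. rewrite (vsum_ext _ _ (fun i => 1 * idm i k)) by (intros; ring).
  now apply vsum_kronecker.
Qed.

Lemma kernel_columns_repr a : In a kernel_columns -> cone_repr a 1.
Proof.
  unfold kernel_columns. rewrite !in_app_iff, !in_map_iff.
  intros [[k [<- Hk]]|[[k [<- Hk]]|[k [<- Hk]]]]; apply in_seq in Hk.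
  - exists (fun i => idm i k), (fun _ => 0), (fun _ => 0). split; [|split].
    + intros i _. unfold idm. destruct (Nat.eqb i k); lra.
    + intros i _. rewrite !mulmv_zero. unfold unit_col. ring.
    + rewrite <- (vsum_unit k) by lia. apply vsum_ext. intros; ring.
  - exists (fun _ => 0), (fun i => idm i k), (fun _ => 0). split; [|split].
    + intros i _. unfold idm. destruct (Nat.eqb i k); lra.
    + intros i _. rewrite mulmv_zero, mulmv_unit by lia. unfold neg_col. ring.
    + rewrite <- (vsum_unit k) by lia. apply vsum_ext. intros; ring.
  - exists (fun _ => 0), (fun _ => 0), (fun i => idm i k). split; [|split].
    + intros i _. unfold idm. destruct (Nat.eqb i k); lra.
    + intros i _. rewrite mulmv_zero, mulmv_unit by lia. unfold neg_col. ring.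
    + rewrite <- (vsum_unit k) by lia. apply vsum_ext. intros; ring.
Qed.

Lemma dot_neg_col l M j : dot n l (neg_col M j) = - mulvm n l M j.
Proof.
  unfold dot, neg_col, mulvm.
  rewrite <- (Rmult_1_l (vsum n (fun i => l i * M i j))), Ropp_mult_distr_l, <- vsum_scal.
  apply vsum_ext. intros; ring.
Qed.

End KernelCone.

Lemma cond_b_cond_a n A J : cond_b n A J -> cond_a n A J.
Proof.
  intros Hb. destruct (gordan n (kernel_columns n A J)) as [l Hl].
  - intros c [Hc [Hpos Hzero]].
    destruct (cone_repr_lcomb n A J _ c (kernel_columns_repr n A J) Hc)
      as [x [y [z [Hxyz [Hrepr Hsum]]]]].
    assert (Hw : 0 < total_weight c) by (eapply total_weight_pos; eauto).
    assert (Hxyz0 : forall i, (i < n)%nat -> x i = 0 /\ y i = 0 /\ z i = 0).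
    { apply Hb; [exact Hxyz|]. intros i Hi. rewrite <- Hrepr by exact Hi. auto. }
    rewrite (vsum_ext _ _ (fun _ => 0)), vsum_zero in Hsum; [lra|].
    intros i Hi. destruct (Hxyz0 i Hi) as [-> [-> ->]]. ring.
  - exists l. split; [|split]; intros j Hj.
    + enough (dot n l (unit_col j) = l j) as <-.
      { apply Hl. unfold kernel_columns. apply in_or_app. left.
        apply in_map, in_seq. lia. }
      now apply vsum_kronecker.
    + enough (0 < dot n l (neg_col A j)) by (rewrite dot_neg_col in *; lra).
      apply Hl. unfold kernel_columns. rewrite !in_app_iff. right. left.
      apply in_map, in_seq. lia.
    + enough (0 < dot n l (neg_col (JmI J) j)) by (rewrite dot_neg_col in *; lra).
      apply Hl. unfold kernel_columns. rewrite !in_app_iff. right. right.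
      apply in_map, in_seq. lia.
Qed.

Lemma limit1_in_abs f D L p :
  limit1_in f D L p -> limit1_in (fun s => Rabs (f s)) D (Rabs L) p.
Proof.
  intros Hf eps Heps. destruct (Hf eps Heps) as [d [Hd Hfd]]. exists d. split; [exact Hd|].
  intros s Hs. specialize (Hfd s Hs). simpl in *. unfold R_dist in *.
  eapply Rle_lt_trans; [apply Rabs_triang_inv2 | exact Hfd].
Qed.

Lemma limit1_in_vsum m (F : R -> nat -> R) (Lv : nat -> R) D p :
  (forall i, (i < m)%nat -> limit1_in (fun s => F s i) D (Lv i) p) ->
  limit1_in (fun s => vsum m (F s)) D (vsum m Lv) p.
Proof.
  induction m as [|m IH]; intros HF; simpl.
  - apply (limit_free (fun _ => 0) D 0 p).
  - apply limit_plus; [apply IH; intros; apply HF; lia | apply HF; lia].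
Qed.

Lemma limit1_in_continuous f D p :
  continuity_pt f p -> (forall s, D s -> s <> p) -> limit1_in f D (f p) p.
Proof.
  intros Hf HD eps Heps. destruct (Hf eps Heps) as [d [Hd Hfd]]. exists d. split; [exact Hd|].
  intros s [Hs Hsd]. apply Hfd. split; [split; [exact I | apply not_eq_sym, HD, Hs] | exact Hsd].
Qed.

Lemma limit1_in_le f g D L M p :
  (forall d, 0 < d -> exists s, D s /\ Rabs (s - p) < d) ->
  limit1_in f D L p -> limit1_in g D M p ->
  (exists d0, 0 < d0 /\ forall s, D s -> Rabs (s - p) < d0 -> f s <= g s) ->
  L <= M.
Proof.
  intros Hadh Hf Hg [d0 [Hd0 Hfg]]. apply Rnot_lt_le. intros HML.
  destruct (Hf ((L - M) / 2)) as [d1 [Hd1 Hf1]]; [lra|].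
  destruct (Hg ((L - M) / 2)) as [d2 [Hd2 Hg2]]; [lra|].
  destruct (Hadh (Rmin d0 (Rmin d1 d2))) as [s [Hs Hsp]];
    [repeat apply Rmin_case; lra|].
  pose proof (Rmin_l d0 (Rmin d1 d2)). pose proof (Rmin_r d0 (Rmin d1 d2)).
  pose proof (Rmin_l d1 d2). pose proof (Rmin_r d1 d2).
  assert (Hs1 : R_dist s p < d1) by (unfold R_dist; lra).
  assert (Hs2 : R_dist s p < d2) by (unfold R_dist; lra).
  specialize (Hfg s Hs ltac:(lra)).
  specialize (Hf1 s (conj Hs Hs1)). specialize (Hg2 s (conj Hs Hs2)).
  simpl in Hf1, Hg2. unfold R_dist in Hf1, Hg2.
  apply Rabs_def2 in Hf1. apply Rabs_def2 in Hg2. lra.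
Qed.

Lemma right_adherent p d : 0 < d -> exists s, p < s /\ Rabs (s - p) < d.
Proof. intros Hd. exists (p + d / 2). rewrite Rabs_right; lra. Qed.

Lemma left_adherent p d : 0 < d -> exists s, s < p /\ Rabs (s - p) < d.
Proof. intros Hd. exists (p - d / 2). rewrite Rabs_left; lra. Qed.

Lemma limit1_in_right f p L :
  (forall eps, 0 < eps -> exists d, 0 < d /\ forall s, p < s < p + d -> Rabs (f s - L) < eps) ->
  limit1_in f (fun s => p < s) L p.
Proof.
  intros Hf eps Heps. destruct (Hf eps Heps) as [d [Hd Hfd]]. exists d. split; [exact Hd|].
  intros s [Hs Hsd]. simpl in *. unfold R_dist in *. apply Hfd.
  apply Rabs_def2 in Hsd. lra.
Qed.

Lemma limit1_in_left f p L :
  (forall eps, 0 < eps -> exists d, 0 < d /\ forall s, p - d < s < p -> Rabs (f s - L) < eps) ->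
  limit1_in f (fun s => s < p) L p.
Proof.
  intros Hf eps Heps. destruct (Hf eps Heps) as [d [Hd Hfd]]. exists d. split; [exact Hd|].
  intros s [Hs Hsd]. simpl in *. unfold R_dist in *. apply Hfd.
  apply Rabs_def2 in Hsd. lra.
Qed.

(** * Decay of the weighted norm between impulses *)

Definition weighted_norm (n : nat) (l v : vec) : R := vsum n (fun i => l i * Rabs (v i)).

Lemma weighted_norm_nonneg n l v :
  (forall i, (i < n)%nat -> 0 < l i) -> 0 <= weighted_norm n l v.
Proof.
  intros Hl. apply vsum_nonneg. intros i Hi.
  apply Rmult_le_pos; [apply Rlt_le, Hl, Hi | apply Rabs_pos].
Qed.

(* [sqrt (r^2 + d^2)] is a smooth approximation of [|r|] from above. *)
Definition smooth_abs (d r : R) : R := sqrt (r * r + d * d).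

Section SmoothAbs.

Variables (d r : R).
Hypothesis Hd : 0 < d.

Lemma smooth_abs_sqr : smooth_abs d r * smooth_abs d r = r * r + d * d.
Proof. apply sqrt_sqrt. nra. Qed.

Lemma smooth_abs_pos : 0 < smooth_abs d r.
Proof. apply sqrt_lt_R0. nra. Qed.

Lemma Rabs_le_smooth_abs : Rabs r <= smooth_abs d r.
Proof.
  pose proof smooth_abs_sqr. pose proof smooth_abs_pos. pose proof (Rabs_pos r).
  assert (Rabs r * Rabs r = r * r) by (rewrite <- Rabs_mult; apply Rabs_right; nra).
  nra.
Qed.

Lemma smooth_abs_le : smooth_abs d r <= Rabs r + d.
Proof.
  pose proof smooth_abs_sqr. pose proof smooth_abs_pos. pose proof (Rabs_pos r).
  assert (Rabs r * Rabs r = r * r) by (rewrite <- Rabs_mult; apply Rabs_right; nra).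
  nra.
Qed.

Lemma Rabs_div_smooth_abs : Rabs (r / smooth_abs d r) <= 1.
Proof.
  pose proof smooth_abs_pos. pose proof Rabs_le_smooth_abs.
  unfold Rdiv. rewrite Rabs_mult, Rabs_inv, (Rabs_right (smooth_abs d r)) by lra.
  apply (Rmult_le_reg_r (smooth_abs d r)); [lra|].
  rewrite Rmult_assoc, Rinv_l by lra. lra.
Qed.

Lemma smooth_abs_diag a : a * (r * (r / smooth_abs d r)) <= a * smooth_abs d r + Rabs a * d.
Proof.
  pose proof smooth_abs_sqr as Hsq. pose proof smooth_abs_pos as Hpos.
  set (s := smooth_abs d r) in *. set (q := r * (r / s)).
  assert (Hq : q * s = r * r) by (unfold q; field; lra).
  assert (d <= s) by nra. assert (q <= s) by nra. assert (s - d <= q) by nra.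
  destruct (Rle_dec 0 a); [rewrite Rabs_right by lra | rewrite Rabs_left by lra]; nra.
Qed.

End SmoothAbs.

Lemma smooth_abs_derivable d f s f' :
  0 < d -> derivable_pt_lim f s f' ->
  derivable_pt_lim (fun u => smooth_abs d (f u)) s (f s * f' / smooth_abs d (f s)).
Proof.
  intros Hd Hf. pose proof (smooth_abs_pos d (f s) Hd).
  replace (f s * f' / smooth_abs d (f s))
    with (/ (2 * sqrt (f s * f s + d * d)) * (f' * f s + f s * f' + 0))
    by (unfold smooth_abs in *; field; lra).
  apply (derivable_pt_lim_comp (fun u => f u * f u + d * d) sqrt).
  - apply (derivable_pt_lim_plus (fun u => f u * f u) (fun _ => d * d)).
    + now apply (derivable_pt_lim_mult f f).
    + apply derivable_pt_lim_const.
  - apply derivable_pt_lim_sqrt. nra.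
Qed.

Lemma exp_scale_derivable c s : derivable_pt_lim (fun u => exp (c * u)) s (c * exp (c * s)).
Proof.
  assert (Hlin : derivable_pt_lim (fun u => c * u) s (0 * s + c * 1))
    by (apply (derivable_pt_lim_mult (fun _ => c) (fun u => u));
        [apply derivable_pt_lim_const | apply derivable_pt_lim_id]).
  replace (0 * s + c * 1) with c in Hlin by ring.
  rewrite Rmult_comm.
  exact (derivable_pt_lim_comp (fun u => c * u) exp s c _ Hlin (derivable_pt_lim_exp _)).
Qed.

Lemma nonpos_derivative_antitone H H' a b :
  a <= b -> (forall u, a <= u <= b -> derivable_pt_lim H u (H' u)) ->
  (forall u, a < u < b -> H' u <= 0) -> H b <= H a.
Proof.
  intros Hab HH HH'. destruct (Req_dec a b) as [->|Hne]; [lra|].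
  destruct (MVT_cor2 H H' a b) as [u [Hu Hau]]; [lra | exact HH|].
  specialize (HH' u Hau). nra.
Qed.

Definition smooth_norm (n : nat) (l : vec) (d : R) (v : vec) : R :=
  vsum n (fun i => l i * smooth_abs d (v i)).

Definition diag_weight (n : nat) (l : vec) (A : mat) : R := vsum n (fun i => l i * Rabs (A i i)).

Section Dissipation.

Variables (n : nat) (A : mat) (l : vec) (c : R).
Hypothesis HA : metzler n A.
Hypothesis Hl : forall i, (i < n)%nat -> 0 < l i.
Hypothesis HlA : forall j, (j < n)%nat -> mulvm n l A j <= - c * l j.

Lemma smooth_row_bound d v i : 0 < d -> (i < n)%nat ->
  v i * mulmv n A v i / smooth_abs d (v i) <=
  vsum n (fun j => A i j * smooth_abs d (v j)) + Rabs (A i i) * d.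
Proof.
  intros Hd Hi.
  replace (v i * mulmv n A v i / smooth_abs d (v i))
    with (vsum n (fun j => A i j * (v j * (v i / smooth_abs d (v i)))))
    by (transitivity (v i / smooth_abs d (v i) * mulmv n A v i);
        [unfold mulmv; rewrite <- vsum_scal; apply vsum_ext; intros; ring
        | unfold Rdiv; ring]).
  rewrite <- (vsum_kronecker n i (fun j => Rabs (A j j) * d)) by exact Hi.
  rewrite <- vsum_plus. apply vsum_le. intros j Hj. unfold idm.
  destruct (Nat.eqb_spec j i) as [->|Hji].
  - rewrite Rmult_1_r. apply smooth_abs_diag, Hd.
  - rewrite Rmult_0_r, Rplus_0_r. apply Rmult_le_compat_l; [apply HA; auto|].
    eapply Rle_trans; [apply Rle_abs|]. rewrite Rabs_mult.
    pose proof (Rabs_le_smooth_abs d (v j) Hd). pose proof (Rabs_div_smooth_abs d (v i) Hd).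
    pose proof (Rabs_pos (v j)). pose proof (Rabs_pos (v i / smooth_abs d (v i))). nra.
Qed.

Lemma smooth_norm_dissipation d v : 0 < d ->
  vsum n (fun i => l i * (v i * mulmv n A v i / smooth_abs d (v i))) <=
  - c * smooth_norm n l d v + diag_weight n l A * d.
Proof.
  intros Hd. eapply Rle_trans.
  { apply vsum_le. intros i Hi. apply Rmult_le_compat_l; [apply Rlt_le, Hl, Hi|].
    apply smooth_row_bound; assumption. }
  rewrite (vsum_ext n _ (fun i => l i * mulmv n A (fun j => smooth_abs d (v j)) i
                                  + d * (l i * Rabs (A i i)))) by (intros; unfold mulmv; ring).
  rewrite vsum_plus, vsum_scal, vsum_mulmv. unfold smooth_norm, diag_weight.
  rewrite <- (vsum_scal n (- c)).
  enough (vsum n (fun j => mulvm n l A j * smooth_abs d (v j)) <=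
          vsum n (fun i => - c * (l i * smooth_abs d (v i)))) by lra.
  apply vsum_le. intros j Hj. pose proof (smooth_abs_pos d (v j) Hd).
  specialize (HlA j Hj). nra.
Qed.

End Dissipation.

Lemma vsum_derivable m (F : R -> nat -> R) (D : nat -> R) s :
  (forall i, (i < m)%nat -> derivable_pt_lim (fun u => F u i) s (D i)) ->
  derivable_pt_lim (fun u => vsum m (F u)) s (vsum m D).
Proof.
  induction m as [|m IH]; intros HF; simpl; [apply derivable_pt_lim_const|].
  apply (derivable_pt_lim_plus (fun u => vsum m (F u)) (fun u => F u m));
    [apply IH; intros; apply HF | apply HF]; lia.
Qed.

Lemma smooth_norm_le n l d v : (forall i, (i < n)%nat -> 0 < l i) -> 0 < d ->
  weighted_norm n l v <= smooth_norm n l d v <= weighted_norm n l v + d * vsum n l.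
Proof.
  intros Hl Hd. unfold weighted_norm, smooth_norm. rewrite <- vsum_scal, <- vsum_plus.
  split; apply vsum_le; intros i Hi; specialize (Hl i Hi).
  - apply Rmult_le_compat_l; [lra | apply Rabs_le_smooth_abs, Hd].
  - pose proof (smooth_abs_le d (v i) Hd). nra.
Qed.

Section FlowDecay.

Variables (n : nat) (A : mat) (l : vec) (c : R) (x : R -> vec) (a0 b0 : R).
Hypothesis HA : metzler n A.
Hypothesis Hl : forall i, (i < n)%nat -> 0 < l i.
Hypothesis Hc : 0 < c.
Hypothesis HlA : forall j, (j < n)%nat -> mulvm n l A j <= - c * l j.
Hypothesis Hflow : forall s i, (i < n)%nat -> a0 < s < b0 ->
  derivable_pt_lim (fun r => x r i) s (mulmv n A (x s) i).

Lemma smooth_norm_derivable d s : 0 < d -> a0 < s < b0 ->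
  derivable_pt_lim (fun u => smooth_norm n l d (x u)) s
    (vsum n (fun i => l i * (x s i * mulmv n A (x s) i / smooth_abs d (x s i)))).
Proof.
  intros Hd Hs. apply vsum_derivable. intros i Hi.
  apply (derivable_pt_lim_scal (fun u => smooth_abs d (x u i))).
  apply smooth_abs_derivable; auto.
Qed.

Lemma smoothed_decay d a s : 0 < d -> a0 < a -> a <= s -> s < b0 ->
  exp (c * s) * (smooth_norm n l d (x s) - diag_weight n l A * d / c) <=
  exp (c * a) * (smooth_norm n l d (x a) - diag_weight n l A * d / c).
Proof.
  intros Hd Ha Has Hs.
  apply (nonpos_derivative_antitone
    (fun u => exp (c * u) * (smooth_norm n l d (x u) - diag_weight n l A * d / c))
    (fun u => c * exp (c * u) * (smooth_norm n l d (x u) - diag_weight n l A * d / c)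
            + exp (c * u) *
              vsum n (fun i => l i * (x u i * mulmv n A (x u) i / smooth_abs d (x u i)))));
    [exact Has | |].
  - intros u Hu.
    apply (derivable_pt_lim_mult (fun u => exp (c * u))
             (fun u => smooth_norm n l d (x u) - diag_weight n l A * d / c));
      [apply exp_scale_derivable|].
    replace (vsum n _)
      with (vsum n (fun i => l i * (x u i * mulmv n A (x u) i / smooth_abs d (x u i))) - 0)
      by ring.
    apply (derivable_pt_lim_minus (fun u => smooth_norm n l d (x u)) (fun _ => _));
      [apply smooth_norm_derivable; auto; lra | apply derivable_pt_lim_const].
  - intros u Hu. pose proof (exp_pos (c * u)).
    pose proof (smooth_norm_dissipation n A l c HA Hl HlA d (x u) Hd).
    replace (diag_weight n l A * d / c) with (/ c * (diag_weight n l A * d)) by (field; lra).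
    assert (c * (/ c * (diag_weight n l A * d)) = diag_weight n l A * d) by (field; lra).
    nra.
Qed.

Lemma weighted_norm_decay a s : a0 < a -> a <= s -> s < b0 ->
  exp (c * s) * weighted_norm n l (x s) <= exp (c * a) * weighted_norm n l (x a).
Proof.
  intros Ha Has Hs.
  set (K := exp (c * a) * vsum n l + exp (c * s) * (diag_weight n l A / c)).
  assert (HK : 0 <= K).
  { assert (0 <= vsum n l) by (apply vsum_nonneg; intros i Hi; apply Rlt_le, Hl, Hi).
    assert (0 <= diag_weight n l A / c).
    { apply Rmult_le_pos; [|apply Rlt_le, Rinv_0_lt_compat, Hc].
      apply vsum_nonneg. intros i Hi. apply Rmult_le_pos; [apply Rlt_le, Hl, Hi | apply Rabs_pos]. }
    pose proof (exp_pos (c * a)). pose proof (exp_pos (c * s)). unfold K. nra. }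
  apply Rle_plus_epsilon. intros eps Heps.
  set (d := eps / (K + 1)).
  assert (Hd : 0 < d) by (apply Rdiv_lt_0_compat; lra).
  assert (HdK : d * K <= eps).
  { unfold d. apply (Rmult_le_reg_r (K + 1)); [lra|].
    replace (eps / (K + 1) * K * (K + 1)) with (eps * K) by (field; lra). nra. }
  pose proof (smoothed_decay d a s Hd Ha Has Hs) as Hdecay.
  destruct (smooth_norm_le n l d (x s) Hl Hd) as [Hs1 _].
  destruct (smooth_norm_le n l d (x a) Hl Hd) as [_ Ha2].
  pose proof (exp_pos (c * a)). pose proof (exp_pos (c * s)).
  assert (exp (c * s) * weighted_norm n l (x s) <= exp (c * s) * smooth_norm n l d (x s))
    by (apply Rmult_le_compat_l; lra).
  assert (exp (c * a) * smooth_norm n l d (x a) <=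
          exp (c * a) * (weighted_norm n l (x a) + d * vsum n l))
    by (apply Rmult_le_compat_l; lra).
  assert (Hneg : 0 <= exp (c * a) * (diag_weight n l A * d / c)).
  { apply Rmult_le_pos; [lra|]. unfold Rdiv. rewrite Rmult_assoc.
    apply Rmult_le_pos; [|apply Rmult_le_pos; [lra | apply Rlt_le, Rinv_0_lt_compat, Hc]].
    apply vsum_nonneg. intros i Hi. apply Rmult_le_pos; [apply Rlt_le, Hl, Hi | apply Rabs_pos]. }
  replace (d * K) with (exp (c * a) * (d * vsum n l) + exp (c * s) * (diag_weight n l A * d / c))
    in HdK by (unfold K; field; lra).
  nra.
Qed.

End FlowDecay.

(** * Stability under arbitrary dwell times *)

Lemma weighted_norm_mulmv_le n J l v :
  nonneg_mat n J -> (forall i, (i < n)%nat -> 0 < l i) ->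
  (forall j, (j < n)%nat -> mulvm n l J j <= l j) ->
  weighted_norm n l (mulmv n J v) <= weighted_norm n l v.
Proof.
  intros HJ Hl HlJ. unfold weighted_norm.
  apply Rle_trans with (vsum n (fun i => l i * mulmv n J (fun j => Rabs (v j)) i)).
  - apply vsum_le. intros i Hi. apply Rmult_le_compat_l; [apply Rlt_le, Hl, Hi|].
    eapply Rle_trans; [apply Rabs_vsum_le|]. apply Req_le, vsum_ext. intros j Hj.
    rewrite Rabs_mult, (Rabs_right (J i j)); [reflexivity | apply Rle_ge, HJ; auto].
  - rewrite vsum_mulmv. apply vsum_le. intros j Hj.
    apply Rmult_le_compat_r; [apply Rabs_pos | apply HlJ, Hj].
Qed.

Lemma weighted_norm_limit n l c x D p v :
  (forall s, D s -> s <> p) ->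
  (forall i, (i < n)%nat -> limit1_in (fun s => x s i) D (v i) p) ->
  limit1_in (fun s => exp (c * s) * weighted_norm n l (x s)) D
            (exp (c * p) * weighted_norm n l v) p.
Proof.
  intros HD Hx. apply limit_mul.
  - apply (limit1_in_continuous (fun s => exp (c * s))); [|exact HD].
    apply derivable_continuous_pt. exists (c * exp (c * p)). apply exp_scale_derivable.
  - apply (limit1_in_vsum n (fun s i => l i * Rabs (x s i))). intros i Hi.
    apply limit_mul; [apply (limit_free (fun _ => l i) D 0 p) | apply limit1_in_abs, Hx, Hi].
Qed.

Lemma impulse_interval t : impulse_seq t ->
  forall s, t 0%nat <= s -> exists k, t k <= s < t (S k).
Proof.
  intros [Hinc Hunb] s Hs. destruct (Hunb s) as [K HK]. revert HK.
  induction K as [|K IH]; intros HK; [lra|].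
  destruct (Rle_dec (t K) s); [exists K; lra | apply IH; lra].
Qed.

Section Trajectory.

Variables (n : nat) (A J : mat) (l : vec) (c : R).
Hypothesis HA : metzler n A.
Hypothesis HJ : nonneg_mat n J.
Hypothesis Hl : forall i, (i < n)%nat -> 0 < l i.
Hypothesis Hc : 0 < c.
Hypothesis HlA : forall j, (j < n)%nat -> mulvm n l A j <= - c * l j.
Hypothesis HlJ : forall j, (j < n)%nat -> mulvm n l J j <= l j.
Variables (t : nat -> R) (x0 : vec) (x : R -> vec).
Hypothesis Ht : impulse_seq t.
Hypothesis Hx : is_solution n A J t x0 x.

Let W s := exp (c * s) * weighted_norm n l (x s).

Lemma W_between_impulses k s :
  t k < s <= t (S k) -> W s <= exp (c * t k) * weighted_norm n l (mulmv n J (x (t k))).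
Proof.
  destruct Hx as [_ [Hflow [Hleft Hright]]].
  assert (Htk : t k < t (S k)) by apply (proj1 Ht).
  set (L := exp (c * t k) * weighted_norm n l (mulmv n J (x (t k)))).
  assert (Hopen : forall r, t k < r < t (S k) -> W r <= L).
  { intros r Hr. apply (limit1_in_le (fun _ => W r) W (fun u => t k < u) (W r) L (t k)).
    - apply right_adherent.
    - apply (limit_free (fun _ => W r) _ 0 (t k)).
    - apply weighted_norm_limit; [intros; lra|].
      intros i Hi. apply limit1_in_right. exact (Hright k i Hi).
    - exists (r - t k). split; [lra|]. intros u Hu Hud. apply Rabs_def2 in Hud.
      apply (weighted_norm_decay n A l c x (t k) (t (S k))); auto; try lra.
      intros; now apply (Hflow k). }
  intros Hs. destruct (Req_dec s (t (S k))) as [->|Hne]; [|apply Hopen; lra].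
  apply (limit1_in_le W (fun _ => L) (fun u => u < t (S k)) (W (t (S k))) L (t (S k))).
  - apply left_adherent.
  - apply weighted_norm_limit; [intros; lra|].
    intros i Hi. apply limit1_in_left. exact (Hleft k i Hi).
  - apply (limit_free (fun _ => L) _ 0 (t (S k))).
  - exists (t (S k) - t k). split; [lra|]. intros u Hu Hud. apply Rabs_def2 in Hud.
    apply Hopen. lra.
Qed.

Lemma W_jump_le k : exp (c * t k) * weighted_norm n l (mulmv n J (x (t k))) <= W (t k).
Proof.
  apply Rmult_le_compat_l; [apply Rlt_le, exp_pos|].
  now apply weighted_norm_mulmv_le.
Qed.

Lemma W_impulses k : W (t k) <= W (t 0%nat).
Proof.
  induction k as [|k IH]; [lra|].
  eapply Rle_trans; [apply W_between_impulses | eapply Rle_trans; [apply W_jump_le | exact IH]].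
  pose proof (proj1 Ht k). lra.
Qed.

Lemma W_bound s : t 0%nat <= s -> W s <= W (t 0%nat).
Proof.
  intros Hs. destruct (impulse_interval t Ht s Hs) as [k [[Hks|<-] Hsk]]; [|apply W_impulses].
  eapply Rle_trans; [apply (W_between_impulses k); lra|].
  eapply Rle_trans; [apply W_jump_le | apply W_impulses].
Qed.

Lemma solution_exponential_bound s i : t 0%nat <= s -> (i < n)%nat ->
  l i * Rabs (x s i) * exp (c * (s - t 0%nat)) <= weighted_norm n l x0.
Proof.
  intros Hs Hi.
  assert (Hx0 : weighted_norm n l (x (t 0%nat)) = weighted_norm n l x0).
  { apply vsum_ext. intros j Hj. now rewrite (proj1 Hx j Hj). }
  pose proof (W_bound s Hs) as HW. unfold W in HW. rewrite Hx0 in HW.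
  replace (c * s) with (c * (s - t 0%nat) + c * t 0%nat) in HW by ring.
  rewrite exp_plus in HW.
  pose proof (exp_pos (c * t 0%nat)). pose proof (exp_pos (c * (s - t 0%nat))).
  assert (Hterm : l i * Rabs (x s i) <= weighted_norm n l (x s)).
  { apply (vsum_term_le n (fun j => l j * Rabs (x s j))); [exact Hi|].
    intros j Hj. apply Rmult_le_pos; [apply Rlt_le, Hl, Hj | apply Rabs_pos]. }
  apply (Rmult_le_reg_r (exp (c * t 0%nat))); [lra|].
  assert (l i * Rabs (x s i) * (exp (c * (s - t 0%nat)) * exp (c * t 0%nat)) <=
          weighted_norm n l (x s) * (exp (c * (s - t 0%nat)) * exp (c * t 0%nat)))
    by (apply Rmult_le_compat_r; [apply Rmult_le_pos|]; lra).
  lra.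
Qed.

End Trajectory.

Lemma finite_pos_lower_bound N (g : nat -> R) :
  (forall j, (j < N)%nat -> 0 < g j) -> exists m, 0 < m /\ forall j, (j < N)%nat -> m <= g j.
Proof.
  induction N as [|N IH]; intros Hg; [exists 1; split; [lra | intros; lia]|].
  destruct IH as [m [Hm Hmg]]; [intros; apply Hg; lia|].
  assert (0 < g N) by (apply Hg; lia).
  exists (Rmin m (g N)). split; [apply Rmin_case; lra|].
  intros j Hj. destruct (Nat.eq_dec j N) as [->|HjN]; [apply Rmin_r|].
  eapply Rle_trans; [apply Rmin_l | apply Hmg; lia].
Qed.

Lemma exp_ge_1_plus y : 1 + y <= exp y.
Proof.
  destruct (Req_dec y 0) as [->|Hy]; [rewrite exp_0; lra|].
  apply Rlt_le, exp_ineq1, Hy.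
Qed.

Section StabilityFromBound.

Variables (n : nat) (A J : mat) (t : nat -> R) (l : vec) (c : R).
Hypothesis Hl : forall i, (i < n)%nat -> 0 < l i.
Hypothesis Hc : 0 < c.
Hypothesis Hbound : forall x0 x, is_solution n A J t x0 x ->
  forall s i, t 0%nat <= s -> (i < n)%nat ->
  l i * Rabs (x s i) * exp (c * (s - t 0%nat)) <= weighted_norm n l x0.

Lemma stable_of_exponential_bound eps : 0 < eps -> exists delta, 0 < delta /\
  forall (x0 : vec) (x : R -> vec),
    (forall i, (i < n)%nat -> Rabs (x0 i) < delta) -> is_solution n A J t x0 x ->
    forall s, t 0%nat <= s -> forall i, (i < n)%nat -> Rabs (x s i) < eps.
Proof.
  intros Heps. destruct (finite_pos_lower_bound n l Hl) as [lmin [Hlmin Hlmin_le]].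
  set (S := vsum n l).
  assert (HS : 0 <= S) by (apply vsum_nonneg; intros i Hi; apply Rlt_le, Hl, Hi).
  exists (eps * lmin / (S + 1)). split; [apply Rdiv_lt_0_compat; nra|].
  intros x0 x Hx0 Hx s Hs i Hi.
  assert (HV : weighted_norm n l x0 <= eps * lmin / (S + 1) * S).
  { replace (eps * lmin / (S + 1) * S) with (vsum n (fun j => eps * lmin / (S + 1) * l j))
      by (unfold S; rewrite vsum_scal; ring).
    apply vsum_le. intros j Hj.
    specialize (Hx0 j Hj). specialize (Hl j Hj). nra. }
  assert (Hslack : eps * lmin / (S + 1) * S < eps * lmin).
  { apply (Rmult_lt_reg_r (S + 1)); [lra|].
    replace (eps * lmin / (S + 1) * S * (S + 1)) with (eps * lmin * S) by (field; lra). nra. }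
  specialize (Hbound x0 x Hx s i Hs Hi).
  pose proof (exp_ge_1_plus (c * (s - t 0%nat))).
  pose proof (Hlmin_le i Hi). pose proof (Rabs_pos (x s i)).
  assert (0 <= c * (s - t 0%nat)) by (apply Rmult_le_pos; lra).
  assert (Hexp : 1 <= exp (c * (s - t 0%nat))) by lra.
  assert (0 <= l i * Rabs (x s i)) by (apply Rmult_le_pos; [apply Rlt_le, Hl, Hi | lra]).
  assert (lmin * Rabs (x s i) <= l i * Rabs (x s i)) by (apply Rmult_le_compat_r; lra).
  assert (l i * Rabs (x s i) <= l i * Rabs (x s i) * exp (c * (s - t 0%nat)))
    by (rewrite <- (Rmult_1_r (l i * Rabs (x s i))) at 1; apply Rmult_le_compat_l; lra).
  apply (Rmult_lt_reg_l lmin); [exact Hlmin|]. lra.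
Qed.

Lemma attractive_of_exponential_bound x0 x : is_solution n A J t x0 x ->
  forall i, (i < n)%nat -> forall eps, 0 < eps -> exists T, forall s, T <= s -> Rabs (x s i) < eps.
Proof.
  intros Hx i Hi eps Heps.
  set (V0 := weighted_norm n l x0).
  assert (HV0 : 0 <= V0) by (apply weighted_norm_nonneg, Hl).
  specialize (Hl i Hi).
  assert (Hden : 0 < c * l i * eps) by (apply Rmult_lt_0_compat; [apply Rmult_lt_0_compat|]; lra).
  exists (t 0%nat + V0 / (c * l i * eps)). intros s Hs.
  assert (Hq : 0 <= V0 / (c * l i * eps))
    by (apply Rmult_le_pos; [lra | apply Rlt_le, Rinv_0_lt_compat, Hden]).
  assert (HV0s : V0 <= c * l i * eps * (s - t 0%nat)).
  { replace V0 with (c * l i * eps * (V0 / (c * l i * eps))) by (field; lra).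
    apply Rmult_le_compat_l; lra. }
  specialize (Hbound x0 x Hx s i ltac:(lra) Hi). fold V0 in Hbound.
  pose proof (exp_ge_1_plus (c * (s - t 0%nat))). pose proof (Rabs_pos (x s i)).
  assert (Hgrow : l i * Rabs (x s i) * (1 + c * (s - t 0%nat)) <= V0).
  { eapply Rle_trans; [|exact Hbound]. apply Rmult_le_compat_l; nra. }
  destruct (Rlt_le_dec (Rabs (x s i)) eps) as [Hlt|Hge]; [exact Hlt|].
  exfalso.
  assert (l i * eps * (1 + c * (s - t 0%nat)) <= l i * Rabs (x s i) * (1 + c * (s - t 0%nat))).
  { apply Rmult_le_compat_r; [nra|]. apply Rmult_le_compat_l; lra. }
  nra.
Qed.

Lemma GAS_of_exponential_bound : GAS n A J t.
Proof. split; [exact stable_of_exponential_bound | exact attractive_of_exponential_bound]. Qed.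

End StabilityFromBound.

Lemma mulvm_JmI n l J j : (j < n)%nat -> mulvm n l (JmI J) j = mulvm n l J j - l j.
Proof.
  intros Hj. unfold mulvm, JmI.
  transitivity (vsum n (fun i => l i * J i j) + -1 * vsum n (fun i => l i * idm i j)).
  - rewrite <- vsum_scal, <- vsum_plus. apply vsum_ext. intros; ring.
  - rewrite vsum_kronecker by exact Hj. ring.
Qed.

Lemma cond_a_AS n A J : metzler n A -> nonneg_mat n J -> cond_a n A J -> AS_arbitrary_dwell n A J.
Proof.
  intros HA HJ [l [Hl [HlA HlJ]]] t Ht.
  destruct (finite_pos_lower_bound n (fun j => - mulvm n l A j / l j)) as [c [Hc Hcle]].
  { intros j Hj. specialize (HlA j Hj). specialize (Hl j Hj).
    apply Rdiv_lt_0_compat; lra. }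
  assert (HlA' : forall j, (j < n)%nat -> mulvm n l A j <= - c * l j).
  { intros j Hj. specialize (Hcle j Hj). specialize (Hl j Hj).
    apply (Rmult_le_compat_r (l j)) in Hcle; [|lra].
    replace (- mulvm n l A j / l j * l j) with (- mulvm n l A j) in Hcle by (field; lra).
    lra. }
  assert (HlJ' : forall j, (j < n)%nat -> mulvm n l J j <= l j).
  { intros j Hj. specialize (HlJ j Hj). rewrite mulvm_JmI in HlJ by exact Hj. lra. }
  apply (GAS_of_exponential_bound n A J t l c Hl Hc).
  intros x0 x Hx s i Hs Hi. now apply (solution_exponential_bound n A J l c).
Qed.

Theorem theorem1 (n : nat) (A J : mat)
  (HA : metzler n A) (HJ : nonneg_mat n J) :
  (cond_a n A J <-> cond_b n A J) /\
  ((cond_a n A J \/ cond_b n A J) -> AS_arbitrary_dwell n A J).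
Proof.
  assert (Hab : cond_a n A J <-> cond_b n A J)
    by (split; [apply cond_a_cond_b | apply cond_b_cond_a]).
  split; [exact Hab|].
  intros Hor. apply cond_a_AS; [exact HA | exact HJ|].
  destruct Hor as [Ha|Hb]; [exact Ha | now apply Hab].
Qed.
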